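(* Let $0<\sigma<\infty$, let $f$ be an exposed point of $D(B^1_\sigma)$ with exposing functional $\Phi_f(g)=\int_{\mathbb{R}}g(x)\,\overline{f(x)}/|f(x)|\,dx$. Let $f_n\in D(B^1_\sigma)$, $n\in\mathbb{N}$, with $\lim_{n\to\infty}\Phi_f(f_n)=1$. If $(f_n)$ converges uniformly on compact subsets of $\mathbb{R}$ to some $f_0\in D(B^1_\sigma)$, then there exists $\alpha$ with $0\le\alpha\le1$ such that $f_0=\alpha f$.
   Context: For $0<\sigma<\infty$, $B^1_\sigma$ is the space of $f\in L^1(\mathbb{R})$ whose Fourier transform is supported in $[-\sigma,\sigma]$, with the $L^1(\mathbb{R})$ norm; its elements are continuous (indeed entire) functions. $D(B^1_\sigma)$ is its closed unit ball. A point $f\in D(B^1_\sigma)$ is exposed if there is a continuous linear functional $\Phi$ on $B^1_\sigma$ with $\Phi(f)=\|\Phi\|=1$ and $\mathrm{Re}\,\Phi(g)<1$ for all $g\in D(B^1_\sigma)$, $g\ne f$; this functional is unique and equals $g\mapsto\int_{\mathbb{R}}g(x)\overline{f(x)}/|f(x)|\,dx$ (the integrand defined almost everywhere). *)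

From HB Require Import structures.
From mathcomp Require Import all_boot all_order all_algebra.
From mathcomp Require Import all_classical all_reals all_analysis.
From mathcomp Require Import complex.

Set Implicit Arguments.
Unset Strict Implicit.
Unset Printing Implicit Defensive.

Import Order.TTheory GRing.Theory Num.Theory.
Import numFieldNormedType.Exports.
Local Open Scope classical_set_scope.
Local Open Scope ring_scope.
Local Open Scope complex_scope.

Section Defs.
Variable R : realType.

Local Notation leb := (@lebesgue_measure R).

Definition cre (z : R[i]) : R := complex.Re z.
Definition cim (z : R[i]) : R := complex.Im z.

Definition cabs (z : R[i]) : R := Num.sqrt (cre z ^+ 2 + cim z ^+ 2).

Definition cintegrable (h : R -> R[i]) : Prop :=
  measurable_fun setT (fun x => cre (h x)) /\
  measurable_fun setT (fun x => cim (h x)) /\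
  leb.-integrable setT (fun x => (cabs (h x))%:E).

Definition cint (h : R -> R[i]) : R[i] :=
  (\int[leb]_(x in setT) cre (h x)) +i* (\int[leb]_(x in setT) cim (h x)).

Definition L1norm (h : R -> R[i]) : R := \int[leb]_(x in setT) cabs (h x).

Definition expi (t : R) : R[i] := cos t +i* sin t.

Definition fourier (h : R -> R[i]) (xi : R) : R[i] :=
  cint (fun x => h x * expi (- (x * xi))).

(* B^1_sigma : continuous (the continuous representative) L^1 functions whose
   Fourier transform is supported in [-sigma, sigma]. *)
Definition B1 (sigma : R) (h : R -> R[i]) : Prop :=
  continuous (fun x => cre (h x)) /\ continuous (fun x => cim (h x)) /\
  cintegrable h /\
  (forall xi : R, sigma < `|xi| -> fourier h xi = 0).

Definition DB1 (sigma : R) (h : R -> R[i]) : Prop :=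
  B1 sigma h /\ L1norm h <= 1.

Definition linear_on_B1 (sigma : R) (Phi : (R -> R[i]) -> R[i]) : Prop :=
  forall (a b : R[i]) (g h : R -> R[i]), B1 sigma g -> B1 sigma h ->
    Phi (fun x => a * g x + b * h x) = a * Phi g + b * Phi h.

(* Continuity together with ||Phi|| <= 1 is the bound |Phi g| <= ||g||_1;
   given Phi f = 1 and ||f||_1 <= 1 this is equivalent to ||Phi|| = 1. *)
Definition exposed_by (sigma : R) (f : R -> R[i])
    (Phi : (R -> R[i]) -> R[i]) : Prop :=
  DB1 sigma f /\
  linear_on_B1 sigma Phi /\
  (forall g, B1 sigma g -> cabs (Phi g) <= L1norm g) /\
  Phi f = 1 /\
  (forall g, DB1 sigma g -> g <> f -> cre (Phi g) < 1).

(* The functional g |-> int g(x) conj(f(x)) / |f(x)| dx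
   (integrand set to 0 where f(x) = 0, since z / 0 = 0). *)
Definition Phi_f (f : R -> R[i]) (g : R -> R[i]) : R[i] :=
  cint (fun x => g x * ((f x)^* / `|f x|)).

Definition cvg_ucompact (fs : nat -> R -> R[i]) (f0 : R -> R[i]) : Prop :=
  forall K : set R, compact K -> forall e : R, 0 < e ->
    \forall n \near \oo, forall x, K x -> cabs (fs n x - f0 x) < e.

End Defs.

From HB Require Import structures.
From mathcomp Require Import all_boot all_order all_algebra.
From mathcomp Require Import all_classical all_reals all_analysis.
From mathcomp Require Import complex.
From mathcomp Require Import lra measurable_realfun.

Set Implicit Arguments.
Unset Strict Implicit.
Unset Printing Implicit Defensive.

Import Order.TTheory GRing.Theory Num.Theory.
Import numFieldNormedType.Exports.
Local Open Scope classical_set_scope.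
Local Open Scope ring_scope.
Local Open Scope complex_scope.

(** Only three properties of the exposing functional [Phi] matter: it is
linear, [|Phi g| <= ||g||_1], and [Re Phi < 1] on the unit ball outside [f].
The heart of the proof is [||f0||_1 <= Re Phi(f0)].  Given [t > 0], choose [m]
with [\int_{|x|<m} |f0| > ||f0||_1 - t/4], then [n] with [|f_n - f0| < del]
on [[-m, m]] and [Re Phi(f_n) > 1 - t/4].  On [|x| < m] we have
[|f_n - f0| <= |f_n| - |f0| + 2 del], so [||f_n - f0||_1 <= 1 - ||f0||_1 + 3t/4]
and [Re Phi(f0) >= Re Phi(f_n) - ||f_n - f0||_1 > ||f0||_1 - t].  Then either
[f0 = 0], or [f0 / ||f0||_1] lies in the unit ball with [Re Phi >= 1], hence is [f]. *)

Section ComplexParts.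
Variable R : realType.
Implicit Types (a b : R) (z w : R[i]).

Lemma cabsE z : `|z| = (cabs z)%:C.
Proof. by case: z. Qed.

Lemma cabs_ge0 z : 0 <= cabs z.
Proof. exact: sqrtr_ge0. Qed.

Lemma cabsD z w : cabs (z + w) <= cabs z + cabs w.
Proof. by have := ler_normD z w; rewrite !cabsE -rmorphD lecR. Qed.

Lemma cabsM z w : cabs (z * w) = cabs z * cabs w.
Proof. by have := normrM z w; rewrite !cabsE -rmorphM => -[]. Qed.

Lemma cabsN z : cabs (- z) = cabs z.
Proof. by have := normrN z; rewrite !cabsE => -[]. Qed.

Lemma cabs_real a : cabs a%:C = `|a|.
Proof. by rewrite /cabs /cre /cim /= expr0n /= addr0 sqrtr_sqr. Qed.

Lemma cabs_eq0 z : cabs z = 0 -> z = 0.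
Proof. by move=> z0; apply/normr0_eq0; rewrite cabsE z0. Qed.

Lemma cre_le_cabs z : `|cre z| <= cabs z.
Proof. by have := normc_ge_Re z; rewrite cabsE lecR. Qed.

Lemma cim_le_cabs z : `|cim z| <= cabs z.
Proof.
case: z => a b; rewrite /cabs /cim /cre /= -sqrtr_sqr.
by rewrite ler_sqrt ?addr_ge0 ?sqr_ge0 // lerDr sqr_ge0.
Qed.

Lemma cabs_expi a : cabs (expi a) = 1.
Proof. by rewrite /cabs /cre /cim /= cos2Dsin2 sqrtr1. Qed.

Lemma creB z w : cre (z - w) = cre z - cre w.
Proof. by case: z; case: w. Qed.

Lemma cre_lincomb a b z w : cre (a%:C * z + b%:C * w) = a * cre z + b * cre w.
Proof. by case: z; case: w => c d e f; rewrite /cre /= !mul0r !subr0. Qed.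

Lemma cim_lincomb a b z w : cim (a%:C * z + b%:C * w) = a * cim z + b * cim w.
Proof. by case: z; case: w => c d e f; rewrite /cim /= !mul0r !addr0. Qed.

Lemma cre_realM a z : cre (a%:C * z) = a * cre z.
Proof. by case: z => c d; rewrite /cre /= mul0r subr0. Qed.

Lemma creM z w : cre (z * w) = cre z * cre w - cim z * cim w.
Proof. by case: z; case: w. Qed.

Lemma cimM z w : cim (z * w) = cre z * cim w + cim z * cre w.
Proof. by case: z; case: w. Qed.

End ComplexParts.

Section RealIntegrals.
Variable R : realType.
Local Notation mu := (@lebesgue_measure R).
Implicit Types (F G : R -> R).

Lemma EFin_integrableD F G : mu.-integrable setT (EFin \o F) ->
  mu.-integrable setT (EFin \o G) -> mu.-integrable setT (EFin \o (F \+ G)).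
Proof.
by move=> iF iG; apply: eq_integrable (integrableD measurableT iF iG).
Qed.

Lemma EFin_integrableB F G : mu.-integrable setT (EFin \o F) ->
  mu.-integrable setT (EFin \o G) -> mu.-integrable setT (EFin \o (F \- G)).
Proof.
by move=> iF iG; apply: eq_integrable (integrableB measurableT iF iG).
Qed.

Lemma EFin_integrableZ (k : R) F : mu.-integrable setT (EFin \o F) ->
  mu.-integrable setT (EFin \o (fun x => k * F x)).
Proof.
by move=> iF; apply: eq_integrable (integrableZl measurableT k iF).
Qed.

Lemma continuous_EFin_integrable F G : continuous F -> (forall x, `|F x| <= G x) ->
  mu.-integrable setT (EFin \o G) -> mu.-integrable setT (EFin \o F).
Proof.
move=> cF FG; apply: le_integrable => //.
  by apply/measurable_EFinP; exact: continuous_measurable_fun.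
by move=> x _; rewrite /= lee_fin (le_trans (FG x)) ?ler_norm.
Qed.

Lemma integral_indic_ball (x r : R) : 0 <= r ->
  (\int[mu]_(y in setT) (\1_(ball x r) y)%:E = (r *+ 2)%:E)%E.
Proof.
move=> r0; rewrite (integral_indic mu measurableT (measurable_ball x r)) setIT.
exact: lebesgue_measure_ball.
Qed.

Lemma integrable_indic_ball (x r : R) : 0 <= r ->
  mu.-integrable setT (EFin \o \1_(ball x r)).
Proof.
move=> r0; apply/integrableP; split.
  by apply/measurable_EFinP/measurable_indic; exact: measurable_ball.
under eq_integral do rewrite /= ger0_norm //.
by rewrite integral_indic_ball ?ltry.
Qed.

Lemma Rintegral_indic_ball (x r : R) : 0 <= r ->
  Rintegral mu setT \1_(ball x r) = r *+ 2.
Proof. by move=> r0; rewrite /Rintegral integral_indic_ball. Qed.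

Lemma Rintegral_ball_approx F : (forall x, 0 <= F x) ->
  mu.-integrable setT (EFin \o F) -> forall e, 0 < e ->
  exists m : nat, Rintegral mu setT F - e < Rintegral mu (ball 0 m%:R) F.
Proof.
move=> F0 iF e e0.
have balls_nd : nondecreasing_seq (fun n => ball (0 : R) n%:R : set (measurableTypeR R)).
  by move=> n m nm; apply/subsetPset; apply: le_ball; rewrite ler_nat.
have := ge0_nondecreasing_set_cvg_integral (mu := mu) balls_nd
  (fun n => measurable_ball _ _)
  (fun n => measurable_funS measurableT (subsetT _) (measurable_int _ iF))
  (fun n x _ => ltac:(by rewrite /= lee_fin)).
have fin_int : (\int[mu]_(x in setT) (EFin \o F) x)%E \is a fin_num.
  exact: integrable_fin_num.
rewrite bigcup_ballT -(fineK fin_int).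
move/fine_cvgP => [_ /cvgr_dist_lt/(_ e e0)] [N _ /(_ N (leqnn N)) /=].
by rewrite ltr_norml => /andP[_ close]; exists N; rewrite /Rintegral; lra.
Qed.

Lemma continuous_Rintegral_eq0 F : continuous F -> (forall x, 0 <= F x) ->
  mu.-integrable setT (EFin \o F) -> Rintegral mu setT F = 0 -> forall x, F x = 0.
Proof.
move=> cF F0 iF I0 x; apply/eqP; rewrite eq_le F0 andbT leNgt; apply/negP => Fx.
have /nbhs_ballP[r /= r0 near_x] : nbhs x [set t | F x / 2 < F t].
  by apply: (cvgr_gt _ (cF x)); lra.
have : Rintegral mu setT (fun y => F x / 2 * \1_(ball x r) y) <= Rintegral mu setT F.
  apply: le_Rintegral => //; first exact/EFin_integrableZ/integrable_indic_ball/ltW.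
  move=> y _; rewrite indicE; have [yb|yb] := pselect (ball x r y).
    by rewrite mem_set // mulr1; exact/ltW/near_x.
  by rewrite memNset // mulr0.
rewrite RintegralZl //; last exact/integrable_indic_ball/ltW.
rewrite I0 Rintegral_indic_ball; last exact: ltW.
have : 0 < F x / 2 * (r *+ 2) by apply: mulr_gt0; [lra | exact: mulrn_wgt0].
lra.
Qed.

End RealIntegrals.

Section BernsteinSpace.
Variable R : realType.
Local Notation mu := (@lebesgue_measure R).
Implicit Types (sigma a b : R) (g h : R -> R[i]).

Lemma continuous_lincomb a b (F G : R -> R) : continuous F -> continuous G ->
  continuous (fun x => a * F x + b * G x).
Proof.
move=> cF cG x; apply: cvgD; apply: cvgM;
  [exact: cvg_cst | exact: cF | exact: cvg_cst | exact: cG].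
Qed.

Lemma continuous_cabs h : continuous (fun x => cre (h x)) ->
  continuous (fun x => cim (h x)) -> continuous (fun x => cabs (h x)).
Proof.
move=> cre_h cim_h x; rewrite /cabs.
apply: (continuous_comp (f := fun x => cre (h x) * cre (h x) + cim (h x) * cim (h x))).
  by apply: cvgD; apply: cvgM;
    [exact: cre_h | exact: cre_h | exact: cim_h | exact: cim_h].
exact: sqrt_continuous.
Qed.

Lemma continuous_trig_mul (xi : R) : continuous (fun x : R => cos (- (x * xi))) /\
  continuous (fun x : R => sin (- (x * xi))).
Proof.
have lin : continuous (fun x : R => - (x * xi)).
  by move=> x; apply: cvgN; apply: cvgMl; exact: cvg_id.
by split=> x; apply: (continuous_comp (lin x));
  [exact: continuous_cos | exact: continuous_sin].
Qed.

Lemma fourier_integrable sigma h (xi : R) : B1 sigma h ->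
  mu.-integrable setT (EFin \o (fun x => cre (h x * expi (- (x * xi))))) /\
  mu.-integrable setT (EFin \o (fun x => cim (h x * expi (- (x * xi))))).
Proof.
move=> [cre_h [cim_h [[_ [_ ih]] _]]]; have [ccos csin] := continuous_trig_mul xi.
split; apply: (continuous_EFin_integrable (G := fun x => cabs (h x))) => //.
- under eq_fun do rewrite creM.
  by move=> x; apply: cvgB; apply: cvgM;
    [exact: cre_h | exact: ccos | exact: cim_h | exact: csin].
- by move=> x; rewrite (le_trans (cre_le_cabs _)) // cabsM cabs_expi mulr1.
- under eq_fun do rewrite cimM.
  by move=> x; apply: cvgD; apply: cvgM;
    [exact: cre_h | exact: csin | exact: cim_h | exact: ccos].
- by move=> x; rewrite (le_trans (cim_le_cabs _)) // cabsM cabs_expi mulr1.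
Qed.

Lemma B1_lincomb sigma g h a b : B1 sigma g -> B1 sigma h ->
  B1 sigma (fun x => a%:C * g x + b%:C * h x).
Proof.
move=> Bg Bh; have [cre_g [cim_g [[_ [_ ig]] fourier_g]]] := Bg.
have [cre_h [cim_h [[_ [_ ih]] fourier_h]]] := Bh.
have cre_gh : continuous (fun x => cre (a%:C * g x + b%:C * h x)).
  by under eq_fun do rewrite cre_lincomb; exact: continuous_lincomb.
have cim_gh : continuous (fun x => cim (a%:C * g x + b%:C * h x)).
  by under eq_fun do rewrite cim_lincomb; exact: continuous_lincomb.
do 2!split => //; split.
  do 2!(split; first exact: continuous_measurable_fun).
  apply: (continuous_EFin_integrable
    (G := fun x => `|a| * cabs (g x) + `|b| * cabs (h x))).
  - exact: continuous_cabs.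
  - move=> x; rewrite ger0_norm ?cabs_ge0 //.
    by rewrite (le_trans (cabsD _ _)) // !cabsM !cabs_real.
  - by apply: EFin_integrableD; apply: EFin_integrableZ.
move=> xi /[dup] /fourier_g [re_g im_g] /fourier_h [re_h im_h].
have [ig1 ig2] := fourier_integrable xi Bg; have [ih1 ih2] := fourier_integrable xi Bh.
rewrite /fourier /cint; congr (_ +i* _).
- under eq_Rintegral do rewrite mulrDl -!mulrA cre_lincomb.
  by rewrite RintegralD ?RintegralZl ?re_g ?re_h ?mulr0 ?addr0 //;
    apply: EFin_integrableZ.
- under eq_Rintegral do rewrite mulrDl -!mulrA cim_lincomb.
  by rewrite RintegralD ?RintegralZl ?im_g ?im_h ?mulr0 ?addr0 //;
    apply: EFin_integrableZ.
Qed.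

Lemma B1B sigma g h : B1 sigma g -> B1 sigma h -> B1 sigma (fun x => g x - h x).
Proof.
move=> Bg Bh; have := B1_lincomb 1 (-1) Bg Bh.
by under eq_fun do rewrite rmorphN1 rmorph1 mul1r mulN1r.
Qed.

Lemma B1Z sigma h a : B1 sigma h -> B1 sigma (fun x => a%:C * h x).
Proof.
move=> Bh; have := B1_lincomb a 0 Bh Bh.
by under eq_fun do rewrite rmorph0 mul0r addr0.
Qed.

Lemma cabs_integrable sigma h : B1 sigma h ->
  mu.-integrable setT (EFin \o (fun x => cabs (h x))).
Proof. by case=> _ [_ [[_ [_ ih]] _]]. Qed.

Lemma L1norm_ge0 h : 0 <= L1norm h.
Proof. by apply: Rintegral_ge0 => x _; exact: cabs_ge0. Qed.

Lemma L1norm_eq0 sigma h : B1 sigma h -> L1norm h = 0 -> h = (fun=> 0).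
Proof.
move=> Bh h0; have [cre_h [cim_h _]] := Bh; apply/funext => x.
apply/cabs_eq0; move: x; apply: continuous_Rintegral_eq0 h0.
- exact: continuous_cabs.
- by move=> x; exact: cabs_ge0.
- exact: cabs_integrable Bh.
Qed.

Lemma L1normZ sigma h a : B1 sigma h -> L1norm (fun x => a%:C * h x) = `|a| * L1norm h.
Proof.
move=> Bh; rewrite /L1norm -RintegralZl ?(cabs_integrable Bh) //.
by apply: eq_Rintegral => x _; rewrite cabsM cabs_real.
Qed.

Lemma L1norm_sub_le g h (r e : R) : 0 <= r ->
  mu.-integrable setT (EFin \o (fun x => cabs (g x))) ->
  mu.-integrable setT (EFin \o (fun x => cabs (h x))) ->
  mu.-integrable setT (EFin \o (fun x => cabs (g x - h x))) ->
  (forall x, ball 0 r x -> cabs (g x - h x) < e) ->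
  L1norm (fun x => g x - h x) <= L1norm g + L1norm h
    - 2 * Rintegral mu (ball 0 r) (fun x => cabs (h x)) + 2 * (e * (r *+ 2)).
Proof.
move=> r0 ig ih igh close.
pose B := ball (0 : R) r; pose H x := cabs (h x).
have iHB : mu.-integrable setT (EFin \o H \_ B).
  have mB : measurable (B : set (measurableTypeR R)) := measurable_ball _ _.
  have : mu.-integrable B (EFin \o H) := integrableS measurableT mB (subsetT _) ih.
  by move/(integrable_mkcond _ mB); rewrite restrict_EFin.
have iE : mu.-integrable setT (EFin \o (fun x => e * \1_B x)).
  exact/EFin_integrableZ/integrable_indic_ball.
have iGH : mu.-integrable setT (EFin \o (fun x => cabs (g x) + H x)).
  exact: EFin_integrableD.
have i2HB : mu.-integrable setT (EFin \o (fun x => 2 * (H \_ B) x)).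
  exact: EFin_integrableZ.
have iGHB : mu.-integrable setT (EFin \o (fun x => cabs (g x) + H x - 2 * (H \_ B) x)).
  exact: EFin_integrableB.
have i2E : mu.-integrable setT (EFin \o (fun x => 2 * (e * \1_B x))).
  exact: EFin_integrableZ.
pose bound := fun x => cabs (g x) + H x - 2 * (H \_ B) x + 2 * (e * \1_B x).
have le_bound x : cabs (g x - h x) <= bound x.
  rewrite /bound patchE indicE /H; have [xB|xB] := pselect (B x).
    (* on [B], [|h| <= |g| + |g - h|] and [|g - h| < e] *)
    have := cabsD (g x) (- (g x - h x)); rewrite cabsN opprB addrC subrK.
    by rewrite mem_set // mulr1; have := close x xB; lra.
  by rewrite memNset // !mulr0 subr0 addr0 (le_trans (cabsD _ _)) ?cabsN.
have := le_Rintegral measurableT igh (EFin_integrableD iGHB i2E) (fun x _ => le_bound x).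
rewrite RintegralD // RintegralB // RintegralD // !RintegralZl ?integrable_indic_ball //.
by rewrite /B Rintegral_indic_ball // -Rintegral_mkcond; exact: id.
Qed.

End BernsteinSpace.

Section ExposingFunctional.
Variables (R : realType) (sigma : R) (Phi : (R -> R[i]) -> R[i]).
Hypothesis Phi_linear : linear_on_B1 sigma Phi.
Hypothesis Phi_bounded : forall g, B1 sigma g -> cabs (Phi g) <= L1norm g.

Lemma PhiB g h : B1 sigma g -> B1 sigma h -> Phi (fun x => g x - h x) = Phi g - Phi h.
Proof.
move=> Bg Bh; have := Phi_linear 1 (-1) Bg Bh; rewrite mul1r mulN1r => <-.
by congr Phi; apply/funext => x; rewrite mul1r mulN1r.
Qed.

Lemma PhiZ h a : B1 sigma h -> Phi (fun x => a%:C * h x) = a%:C * Phi h.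
Proof.
move=> Bh; have := Phi_linear a%:C 0 Bh Bh; rewrite mul0r addr0 => <-.
by congr Phi; apply/funext => x; rewrite mul0r addr0.
Qed.

Lemma L1norm_le_re_Phi fs f0 : (forall n, DB1 sigma (fs n)) ->
  (fun n => cabs (Phi (fs n) - 1)) @ \oo --> (0 : R) ->
  B1 sigma f0 -> cvg_ucompact fs f0 -> L1norm f0 <= cre (Phi f0).
Proof.
move=> fs_ball Phi_fs f0B fs_f0; apply/ler_addgt0Pr => t t0.
have t4 : 0 < t / 4 by lra.
have [m f0_ball] :=
  Rintegral_ball_approx (fun x => cabs_ge0 (f0 x)) (cabs_integrable f0B) t4.
pose len : R := m%:R *+ 2.
have len0 : 0 <= len by rewrite mulrn_wge0.
(* [len] is the length of [ball 0 m]; [del] makes the error [2 del len] at most [t/4] *)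
pose del := t / (8 * (len + 1)).
have del0 : 0 < del by apply: divr_gt0; lra.
have del_small : del * len <= t / 8.
  by rewrite /del mulrAC ler_pdivrMr; nra.
have [n [fs_close Phi_fs_n]] : exists n,
    (forall x, ball 0 m%:R x -> cabs (fs n x - f0 x) < del) /\
    1 - t / 4 < cre (Phi (fs n)).
  near \oo => n; exists n; split; near: n.
    move: (fs_f0 _ (@segment_compact _ (- m%:R) m%:R) _ del0).
    apply: filterS => n close x xm.
    apply: close; move: xm; rewrite /ball /= sub0r normrN ltr_norml => /andP[? ?].
    by rewrite in_itv /= !ltW.
  move/cvgr0_norm_lt: Phi_fs => /(_ _ t4); apply: filterS => n.
  rewrite ger0_norm ?cabs_ge0 //; have := cre_le_cabs (Phi (fs n) - 1).
  by rewrite creB (_ : cre 1 = 1) // ler_norml => /andP[]; lra.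
have [fsB fs_norm] := fs_ball n.
have fs_f0B := B1B fsB f0B.
have re_le : cre (Phi (fs n)) - cre (Phi f0) <= cabs (Phi (fun x => fs n x - f0 x)).
  by rewrite -creB PhiB // (le_trans (ler_norm _) (cre_le_cabs _)).
have := L1norm_sub_le (ler0n R m) (cabs_integrable fsB) (cabs_integrable f0B)
  (cabs_integrable fs_f0B) fs_close.
have := Phi_bounded fs_f0B.
rewrite -/len -/(L1norm f0) in f0_ball *; lra.
Unshelve. all: by end_near.
Qed.

Lemma exposed_ray f f0 : (forall g, DB1 sigma g -> g <> f -> cre (Phi g) < 1) ->
  B1 sigma f0 -> L1norm f0 <= cre (Phi f0) -> f0 = (fun x => (L1norm f0)%:C * f x).
Proof.
move=> exposes f0B f0_le.
have := L1norm_ge0 f0; rewrite le_eqVlt => /predU1P[N0|N0].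
  by rewrite -N0 (L1norm_eq0 f0B) //; apply/funext => x; rewrite mul0r.
pose g x := (L1norm f0)^-1%:C * f0 x.
have gB : B1 sigma g := B1Z _ f0B.
have g_norm : L1norm g = 1.
  by rewrite (L1normZ _ f0B) ger0_norm ?invr_ge0 ?mulVf ?gt_eqF // ltW.
have g_ball : DB1 sigma g by split; rewrite ?g_norm.
have g_f : g = f.
  apply: contrapT => g_neq_f; have := exposes g g_ball g_neq_f.
  by rewrite PhiZ // cre_realM mulrC ltr_pdivrMr // mul1r ltNge f0_le.
by apply/funext => x; rewrite -g_f /g mulrA -rmorphM mulfV ?gt_eqF // mul1r.
Qed.

End ExposingFunctional.

Theorem lemma4p5 (R : realType) (sigma : R) (f : R -> R[i])
    (fs : nat -> R -> R[i]) (f0 : R -> R[i]) :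
  0 < sigma ->
  exposed_by sigma f (Phi_f f) ->
  (forall n, DB1 sigma (fs n)) ->
  (fun n => cabs (Phi_f f (fs n) - 1)) @ \oo --> (0 : R) ->
  DB1 sigma f0 ->
  cvg_ucompact fs f0 ->
  exists alpha : R, 0 <= alpha <= 1 /\ f0 = (fun x => alpha%:C * f x).
Proof.
move=> _ [_ [Phi_linear [Phi_bounded [_ exposes]]]] fs_ball Phi_fs [f0B f0_norm] fs_f0.
exists (L1norm f0); split; first by rewrite L1norm_ge0.
apply: (exposed_ray Phi_linear exposes f0B).
exact: (L1norm_le_re_Phi Phi_linear Phi_bounded fs_ball Phi_fs f0B fs_f0).
Qed.
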